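(* Let $n\ge1$, $a\ge0$, $A=|\psi\rangle\langle\psi|$ for an $n$-qubit pure state $|\psi\rangle$, and let $U$ be a $(2,a,0)$-block-encoding of $A$. Then, using $O(1)$ queries to $U$ (and its controlled version and inverse), one can implement a unitary that is a $(1,a+3,0)$-block-encoding of $I-2A$.
   Context: For an $n$-qubit operator $A$, a unitary $U$ on $n+a$ qubits is an $(\alpha,a,\varepsilon)$-block-encoding of $A$ if $\|\alpha(I_n\otimes\langle0|^{\otimes a})U(I_n\otimes|0\rangle^{\otimes a})-A\|\le\varepsilon$ (operator norm). *)

(* Complex scalars: an arbitrary numClosedFieldType C
   (e.g. the complex numbers); conjugation is Num.conj (notation x^* ). *)
From HB Require Import structures.
From mathcomp Require Import all_boot all_order all_algebra.
Set Implicit Arguments. Unset Strict Implicit. Unset Printing Implicit Defensive.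
Import Order.TTheory GRing.Theory Num.Theory.
Local Open Scope ring_scope.

(* The basis index of C^m (x) C^n is (i, j) |-> i * n + j  (first factor major). *)
Lemma pidx_proof m n (i : 'I_m) (j : 'I_n) : (i * n + j < m * n)%N.
Proof.
have ltin := ltn_ord i; have ltjn := ltn_ord j.
apply: (@leq_trans (i * n + n)); first by rewrite ltn_add2l.
by rewrite -mulSnr leq_mul2r ltin orbT.
Qed.
Definition pidx m n (i : 'I_m) (j : 'I_n) : 'I_(m * n) := Ordinal (pidx_proof i j).

Lemma fstI_proof m n (k : 'I_(m * n)) : (k %/ n < m)%N.
Proof.
case: n k => [|n] k; first by case: k => k; rewrite muln0.
by rewrite ltn_divLR // ltn_ord.
Qed.
Lemma sndI_proof m n (k : 'I_(m * n)) : (k %% n < n)%N.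
Proof.
case: n k => [|n] k; first by case: k => k; rewrite muln0.
by rewrite ltn_pmod.
Qed.
Definition fstI m n (k : 'I_(m * n)) : 'I_m := Ordinal (fstI_proof k).
Definition sndI m n (k : 'I_(m * n)) : 'I_n := Ordinal (sndI_proof k).

Section Quantum.
Variable C : numClosedFieldType.

Definition kron m1 n1 m2 n2 (A : 'M[C]_(m1, n1)) (B : 'M[C]_(m2, n2))
  : 'M[C]_(m1 * m2, n1 * n2) :=
  \matrix_(k, l) (A (fstI k) (fstI l) * B (sndI k) (sndI l)).

Definition adjmx m n (M : 'M[C]_(m, n)) : 'M[C]_(n, m) := (map_mx Num.conj M)^T.

Definition unitarymx d (U : 'M[C]_d) : Prop :=
  U *m adjmx U = 1%:M /\ adjmx U *m U = 1%:M.

Definition vnorm2 d (v : 'cV[C]_d) : C := \sum_i `|v i 0| ^+ 2.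

Definition opnorm_le m n (M : 'M[C]_(m, n)) (eps : C) : Prop :=
  0 <= eps /\ forall v : 'cV[C]_n, vnorm2 (M *m v) <= eps ^+ 2 * vnorm2 v.

Lemma zero_idx_proof b : (0 < 2 ^ b)%N. Proof. by rewrite expn_gt0. Qed.
Definition zero_idx b : 'I_(2 ^ b) := Ordinal (zero_idx_proof b).

(* (I_n (x) <0|^{(x)b}) U (I_n (x) |0>^{(x)b}) ; system = first factor *)
Definition topblock n b (U : 'M[C]_(2 ^ n * 2 ^ b)) : 'M[C]_(2 ^ n) :=
  \matrix_(i, j) U (pidx i (zero_idx b)) (pidx j (zero_idx b)).

Definition block_encoding n b (alpha eps : C) (U : 'M[C]_(2 ^ n * 2 ^ b))
  (A : 'M[C]_(2 ^ n)) : Prop :=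
  unitarymx U /\ opnorm_le (alpha *: topblock U - A) eps.

(* The circuit acts on n + a + 3 qubits = system (n) (x) U's ancilla (a) (x) 3
   extra qubits.  A query applies U, U^dagger, controlled-U or controlled-U^dagger
   to the first n + a qubits (control = most significant extra qubit); any other
   placement of a query is obtained by conjugating with fixed (oracle-independent)
   unitaries, which are allowed between queries. *)
Inductive query := QU | QUinv | QcU | QcUinv.

Lemma qdim n a : (2 ^ n * 2 ^ (a + 3) = (2 ^ n * 2 ^ a) * 8)%N.
Proof. by rewrite expnD mulnA. Qed.

(* projector onto the extra-register states whose control qubit is 1 / 0 *)
Definition ctrl1 : 'M[C]_8 := \matrix_(i, j) ((i == j) && (4 <= i)%N)%:R.
Definition ctrl0 : 'M[C]_8 := \matrix_(i, j) ((i == j) && (i < 4)%N)%:R.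

Definition query_gate n a (q : query) (U : 'M[C]_(2 ^ n * 2 ^ a))
  : 'M[C]_(2 ^ n * 2 ^ (a + 3)) :=
  let V := match q with QU | QcU => U | QUinv | QcUinv => adjmx U end in
  let G := match q with
           | QU | QUinv => kron V (1%:M : 'M[C]_8)
           | QcU | QcUinv => kron V ctrl1 + kron (1%:M) ctrl0 end in
  castmx (esym (qdim n a), esym (qdim n a)) G.

Record circuit n a := Circuit {
  c_init : 'M[C]_(2 ^ n * 2 ^ (a + 3));
  c_steps : seq (query * 'M[C]_(2 ^ n * 2 ^ (a + 3))) }.

Definition nqueries n a (c : circuit n a) : nat := size (c_steps c).

Definition circuit_fixed_unitary n a (c : circuit n a) : Prop :=
  unitarymx (c_init c) /\ forall i, (i < size (c_steps c))%N -> unitarymx (nth (QU, 1%:M) (c_steps c) i).2.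

(* the implemented unitary: V_k Q_k ... V_1 Q_1 V_0 *)
Definition run n a (c : circuit n a) (U : 'M[C]_(2 ^ n * 2 ^ a))
  : 'M[C]_(2 ^ n * 2 ^ (a + 3)) :=
  foldl (fun M s => s.2 *m query_gate s.1 U *m M) (c_init c) (c_steps c).

End Quantum.

From Pilot Require Import Defs.
From mathcomp Require Import all_boot all_order all_algebra.
From mathcomp Require Import ring mxtens.
Import Order.TTheory GRing.Theory Num.Theory.
Local Open Scope ring_scope.
Set Implicit Arguments. Unset Strict Implicit. Unset Printing Implicit Defensive.

(* Let Pi be the projector onto the states whose a + 3 ancilla qubits are
   all zero, Q = U (x) I_8 and P the projector onto psi (x) |0>.  The hypothesis
   says Pi Q Pi = P / 2: the good component has amplitude sin (pi/6).  One round of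
   oblivious amplitude amplification V = Q R Q^dagger R Q, with R = 2 Pi - 1,
   triples the angle, so Pi V Pi = -P.  Conjugating the reflection 1 - 2 Pi by V
   then yields Pi V^dagger (1 - 2 Pi) V Pi = Pi - 2 P, whose top block is
   I - 2 |psi><psi|.  Six queries to U and U^dagger suffice. *)

Section Adjoint.
Variable C : numClosedFieldType.

Lemma adjmx_mul m n p (A : 'M[C]_(m, n)) (B : 'M[C]_(n, p)) :
  adjmx (A *m B) = adjmx B *m adjmx A.
Proof. by rewrite /adjmx map_mxM trmx_mul. Qed.

Lemma adjmxB m n (A B : 'M[C]_(m, n)) : adjmx (A - B) = adjmx A - adjmx B.
Proof. by rewrite /adjmx map_mxB linearB. Qed.

Lemma adjmxN m n (A : 'M[C]_(m, n)) : adjmx (- A) = - adjmx A.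
Proof. by rewrite /adjmx map_mxN linearN. Qed.

Lemma adjmxZ m n (c : C) (A : 'M[C]_(m, n)) : adjmx (c *: A) = c^* *: adjmx A.
Proof. by apply/matrixP => i j; rewrite !mxE rmorphM. Qed.

Lemma adjmx1 m : adjmx (1%:M : 'M[C]_m) = 1%:M.
Proof. by rewrite /adjmx map_mx1 trmx1. Qed.

Lemma adjmxK m n (A : 'M[C]_(m, n)) : adjmx (adjmx A) = A.
Proof. by apply/matrixP => i j; rewrite !mxE conjCK. Qed.

Lemma adjmx_delta m n (i : 'I_m) (j : 'I_n) :
  adjmx (delta_mx i j : 'M[C]_(m, n)) = delta_mx j i.
Proof. by rewrite /adjmx map_delta_mx ?rmorph1 ?trmx_delta. Qed.

Lemma adjmx_castmx m n m' n' (em : m = m') (en : n = n') (A : 'M[C]_(m, n)) :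
  adjmx (castmx (em, en) A) = castmx (en, em) (adjmx A).
Proof. by case: m' / em; case: n' / en. Qed.

Lemma adjmx_mul_self d (v : 'cV[C]_d) : adjmx v *m v = (vnorm2 v)%:M.
Proof.
apply/matrixP => i j; rewrite !ord1 !mxE /= mulr1n.
by apply: eq_bigr => k _; rewrite !mxE normCKC.
Qed.

Lemma outer_unit_idem d (v : 'cV[C]_d) :
  vnorm2 v = 1 -> v *m adjmx v *m (v *m adjmx v) = v *m adjmx v.
Proof. by move=> v1; rewrite mulmxA -(mulmxA v) adjmx_mul_self v1 mulmx1. Qed.

End Adjoint.

Section Unitary.
Variable C : numClosedFieldType.

Lemma unitary_mul d (A B : 'M[C]_d) :
  Defs.unitarymx A -> Defs.unitarymx B -> Defs.unitarymx (A *m B).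
Proof.
move=> [AA' A'A] [BB' B'B]; rewrite /Defs.unitarymx adjmx_mul; split.
  by rewrite mulmxA -(mulmxA A) BB' mulmx1 AA'.
by rewrite mulmxA -(mulmxA (adjmx B)) A'A mulmx1 B'B.
Qed.

Lemma unitary_adj d (A : 'M[C]_d) : Defs.unitarymx A -> Defs.unitarymx (adjmx A).
Proof. by move=> [AA' A'A]; rewrite /Defs.unitarymx adjmxK. Qed.

Lemma unitary1 d : Defs.unitarymx (1%:M : 'M[C]_d).
Proof. by rewrite /Defs.unitarymx adjmx1 mulmx1. Qed.

Lemma unitaryN d (A : 'M[C]_d) : Defs.unitarymx A -> Defs.unitarymx (- A).
Proof. by rewrite /Defs.unitarymx adjmxN mulNmx mulmxN !opprK mulNmx mulmxN opprK. Qed.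

Lemma unitary_castmx p q (e : p = q) (A : 'M[C]_p) :
  Defs.unitarymx A -> Defs.unitarymx (castmx (e, e) A).
Proof. by case: q / e. Qed.

End Unitary.

Section Reflection.
Variables (C : numClosedFieldType) (d : nat) (Pi : 'M[C]_d).
Hypotheses (PiPi : Pi *m Pi = Pi) (PiH : adjmx Pi = Pi).

Definition reflmx : 'M[C]_d := 2 *: Pi - 1%:M.

Lemma adjmx_reflmx : adjmx reflmx = reflmx.
Proof. by rewrite adjmxB adjmxZ conjC_nat PiH adjmx1. Qed.

Lemma reflmxK : reflmx *m reflmx = 1%:M.
Proof.
rewrite mulmxBl !mulmxBr !mul1mx mulmx1 -scalemxAl -scalemxAr PiPi scalerA.
by rewrite mulr_natl mulr2n scalerDl addrK opprB addrC subrK.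
Qed.

Lemma unitary_reflmx : Defs.unitarymx reflmx.
Proof. by rewrite /Defs.unitarymx adjmx_reflmx reflmxK. Qed.

Lemma unitary_co_reflmx : Defs.unitarymx (1%:M - 2 *: Pi).
Proof. by rewrite -opprB; apply/unitaryN/unitary_reflmx. Qed.

Definition amplify (Q : 'M[C]_d) := Q *m reflmx *m adjmx Q *m reflmx *m Q.

Lemma unitary_amplify Q : Defs.unitarymx Q -> Defs.unitarymx (amplify Q).
Proof.
move=> uQ; have uR := unitary_reflmx; have uQ' := unitary_adj uQ.
by do !apply: unitary_mul.
Qed.

Lemma compress_conj_co_reflmx (V : 'M[C]_d) : adjmx V *m V = 1%:M ->
  Pi *m (adjmx V *m (1%:M - 2 *: Pi) *m V) *m Pi
  = Pi - 2 *: (adjmx (Pi *m V *m Pi) *m (Pi *m V *m Pi)).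
Proof.
move=> V'V; have splitPi : Pi *m (adjmx V *m Pi *m V) *m Pi
    = adjmx (Pi *m V *m Pi) *m (Pi *m V *m Pi).
  by rewrite !adjmx_mul PiH !mulmxA -(mulmxA _ Pi Pi) PiPi.
rewrite mulmxBr mulmx1 mulmxBl -scalemxAr -scalemxAl V'V.
by rewrite mulmxBr mulmxBl mulmx1 PiPi -scalemxAr -scalemxAl splitPi.
Qed.

Section Amplification.
Variables (Q P : 'M[C]_d).
Hypotheses (QQ' : Q *m adjmx Q = 1%:M) (Q'Q : adjmx Q *m Q = 1%:M).
Hypotheses (PP : P *m P = P) (PH : adjmx P = P).
Hypothesis compressQ : Pi *m Q *m Pi = 2^-1 *: P.

(* With B := Pi Q Pi = P/2 one gets Pi (amplify Q) Pi = 4 B Q^dagger B - 3 B,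
   and B Q^dagger B = B B^dagger B = P/8. *)
Lemma compress_amplify : Pi *m amplify Q *m Pi = - P.
Proof.
set B := Pi *m Q *m Pi.
have PiK m (X : 'M[C]_(m, d)) : X *m Pi *m Pi = X *m Pi by rewrite -mulmxA PiPi.
have QK m (X : 'M[C]_(m, d)) : X *m Q *m adjmx Q = X by rewrite -mulmxA QQ' mulmx1.
have Q'K m (X : 'M[C]_(m, d)) : X *m adjmx Q *m Q = X by rewrite -mulmxA Q'Q mulmx1.
have BQ'B : B *m adjmx Q *m B = (2^-1 * 2^-1 * 2^-1) *: P.
  have -> : B *m adjmx Q *m B = B *m adjmx B *m B.
    by rewrite /B !adjmx_mul PiH !mulmxA !PiK.
  rewrite /B compressQ adjmxZ PH fmorphV rmorph_nat -!scalemxAl -!scalemxAr.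
  by rewrite PP -scalemxAl PP !scalerA mulrA.
have PiQR : Pi *m Q *m reflmx = 2 *: B - Pi *m Q.
  by rewrite /reflmx mulmxBr mulmx1 -scalemxAr.
have RQPi : reflmx *m Q *m Pi = 2 *: B - Q *m Pi.
  by rewrite /reflmx !mulmxBl !mul1mx -!scalemxAl.
have -> : Pi *m amplify Q *m Pi
    = (Pi *m Q *m reflmx) *m adjmx Q *m (reflmx *m Q *m Pi).
  by rewrite /amplify !mulmxA.
rewrite PiQR RQPi mulmxBr !mulmxBl -!scalemxAl -!scalemxAr BQ'B.
rewrite /B !mulmxA !QK !Q'K !PiK ?PiPi compressQ.
rewrite !scalerA -!scalerBl -scaleN1r; congr (_ *: _).
have two_neq0 : (2 : C) != 0 by rewrite pnatr_eq0.
by field.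
Qed.

End Amplification.
End Reflection.

Section Kronecker.
Variable C : numClosedFieldType.

Lemma kron_tensmx m1 n1 m2 n2 (A : 'M[C]_(m1, n1)) (B : 'M[C]_(m2, n2)) :
  kron A B = A *t B.
Proof. by apply/matrixP => k l; rewrite !mxE; congr (A _ _ * B _ _); apply: val_inj. Qed.

Lemma kron_mul m n p q r s (A : 'M[C]_(m, n)) (B : 'M[C]_(p, q))
    (X : 'M[C]_(n, r)) (Y : 'M[C]_(q, s)) :
  kron A B *m kron X Y = kron (A *m X) (B *m Y).
Proof. by rewrite !kron_tensmx tensmx_mul. Qed.

Lemma kron1 p q : kron (1%:M : 'M[C]_p) (1%:M : 'M[C]_q) = 1%:M.
Proof.
rewrite kron_tensmx; apply/matrixP => k l.
case: (mxtens_indexP k) => i j; case: (mxtens_indexP l) => i' j'.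
rewrite tensmxE !mxE -natrM mulnb; congr (_%:R).
by rewrite (inj_eq (can_inj (@mxtens_indexK _ _))) xpair_eqE.
Qed.

Lemma kronZl m1 n1 m2 n2 c (A : 'M[C]_(m1, n1)) (B : 'M[C]_(m2, n2)) :
  kron (c *: A) B = c *: kron A B.
Proof. by apply/matrixP => k l; rewrite !mxE mulrA. Qed.

Lemma adjmx_kron m1 n1 m2 n2 (A : 'M[C]_(m1, n1)) (B : 'M[C]_(m2, n2)) :
  adjmx (kron A B) = kron (adjmx A) (adjmx B).
Proof. by apply/matrixP => k l; rewrite !mxE rmorphM. Qed.

Lemma kron_idem m n (A : 'M[C]_m) (B : 'M[C]_n) :
  A *m A = A -> B *m B = B -> kron A B *m kron A B = kron A B.
Proof. by move=> AA BB; rewrite kron_mul AA BB. Qed.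

Lemma unitary_kron1 p q (A : 'M[C]_p) :
  Defs.unitarymx A -> Defs.unitarymx (kron A (1%:M : 'M[C]_q)).
Proof.
move=> [AA' A'A]; rewrite /Defs.unitarymx adjmx_kron adjmx1 !kron_mul.
by rewrite AA' A'A mulmx1 kron1.
Qed.

End Kronecker.

Lemma fstI_pidx p q (i : 'I_p) (j : 'I_q) : fstI (pidx i j) = i.
Proof.
have q_gt0 : (0 < q)%N by apply: leq_ltn_trans (ltn_ord j).
by apply: val_inj => /=; rewrite divnMDl // divn_small ?addn0.
Qed.

Lemma sndI_pidx p q (i : 'I_p) (j : 'I_q) : sndI (pidx i j) = j.
Proof. by apply: val_inj => /=; rewrite modnMDl modn_small. Qed.

Lemma pidx_fstI_sndI p q (k : 'I_(p * q)) : pidx (fstI k) (sndI k) = k.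
Proof. by apply: val_inj => /=; rewrite -divn_eq. Qed.

Lemma pidx_inj p q (i i' : 'I_p) (j j' : 'I_q) :
  (pidx i j == pidx i' j') = (i == i') && (j == j').
Proof.
apply/eqP/andP => [eq_ij | [/eqP -> /eqP ->]] //.
by split; apply/eqP; [rewrite -(fstI_pidx i j) eq_ij fstI_pidx
                     | rewrite -(sndI_pidx i j) eq_ij sndI_pidx].
Qed.

Section ExactBlockEncoding.
Variable C : numClosedFieldType.

Lemma opnorm_le0 m n (M : 'M[C]_(m, n)) : opnorm_le M 0 <-> M = 0.
Proof.
split=> [[_ Mv_le] | ->]; last first.
  split=> // v; rewrite mul0mx expr0n mul0r /vnorm2 big1 // => k _.
  by rewrite mxE normr0 expr0n.
apply/matrixP => i j; rewrite mxE.
have : vnorm2 (col j M) == 0.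
  rewrite eq_le sumr_ge0 ?andbT => [|k _]; last exact: exprn_ge0.
  by have := Mv_le (delta_mx j 0); rewrite colE expr0n mul0r.
rewrite /vnorm2 psumr_eq0 => [/allP /(_ i (mem_index_enum _)) | k _]; last exact: exprn_ge0.
by rewrite sqrf_eq0 normr_eq0 mxE => /eqP.
Qed.

Lemma block_encoding_exact n b alpha (U : 'M[C]_(2 ^ n * 2 ^ b)) A :
  block_encoding alpha 0 U A <-> Defs.unitarymx U /\ alpha *: topblock U = A.
Proof.
rewrite /block_encoding opnorm_le0.
by split=> -[uU /eqP]; rewrite ?subr_eq0 => /eqP ->; rewrite ?subrr.
Qed.

End ExactBlockEncoding.

Section ZeroAncilla.
Variables (C : numClosedFieldType) (n b : nat).
Local Notation z := (zero_idx b).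

Definition zero_proj : 'M[C]_(2 ^ n * 2 ^ b) := diag_mx (\row_k (sndI k == z)%:R).

Lemma zero_projK : zero_proj *m zero_proj = zero_proj.
Proof.
rewrite mulmx_diag; congr diag_mx; apply/rowP => k.
by rewrite !mxE -natrM mulnb andbb.
Qed.

Lemma adjmx_zero_proj : adjmx zero_proj = zero_proj.
Proof.
apply/matrixP => k l; rewrite !mxE rmorphMn rmorph_nat.
by case: (eqVneq k l) => [->|]; rewrite ?mulr0n // eq_sym.
Qed.

Lemma compress_zero_proj (M : 'M[C]_(2 ^ n * 2 ^ b)) :
  zero_proj *m M *m zero_proj = kron (topblock M) (delta_mx z z).
Proof.
apply/matrixP => k l; rewrite mul_diag_mx mul_mx_diag !mxE.
case: (eqVneq (sndI k) z) => [k_z | _]; last by rewrite mulr0n !mul0r mulr0.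
case: (eqVneq (sndI l) z) => [l_z | _]; last by rewrite andbF mulr0n !mulr0.
have -> : pidx (fstI k) z = k by rewrite -k_z pidx_fstI_sndI.
have -> : pidx (fstI l) z = l by rewrite -l_z pidx_fstI_sndI.
by rewrite mul1r.
Qed.

Lemma topblock_kron_delta (X : 'M[C]_(2 ^ n)) : topblock (kron X (delta_mx z z)) = X.
Proof. by apply/matrixP => i j; rewrite !mxE !fstI_pidx !sndI_pidx eqxx mulr1. Qed.

Lemma topblock_compress (M : 'M[C]_(2 ^ n * 2 ^ b)) :
  topblock (zero_proj *m M *m zero_proj) = topblock M.
Proof. by rewrite compress_zero_proj topblock_kron_delta. Qed.

Lemma topblock_zero_proj : topblock zero_proj = 1%:M.
Proof. by apply/matrixP => i j; rewrite !mxE sndI_pidx pidx_inj eqxx andbT mulr1n. Qed.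

Lemma topblockB (M N : 'M[C]_(2 ^ n * 2 ^ b)) :
  topblock (M - N) = topblock M - topblock N.
Proof. by apply/matrixP => i j; rewrite !mxE. Qed.

Lemma topblockZ c (M : 'M[C]_(2 ^ n * 2 ^ b)) : topblock (c *: M) = c *: topblock M.
Proof. by apply/matrixP => i j; rewrite !mxE. Qed.

End ZeroAncilla.

Section Queries.
Variables (C : numClosedFieldType) (n a : nat).

Lemma cast_pidx_zero (E : (2 ^ n * 2 ^ (a + 3) = 2 ^ n * 2 ^ a * 8)%N) (i : 'I_(2 ^ n)) :
  cast_ord E (pidx i (zero_idx (a + 3))) = pidx (pidx i (zero_idx a)) (0 : 'I_8).
Proof. by apply: val_inj; rewrite /= !addn0 expnD mulnA. Qed.

Lemma topblock_gateU (U : 'M[C]_(2 ^ n * 2 ^ a)) :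
  topblock (query_gate QU U) = topblock U.
Proof.
apply/matrixP => i j; rewrite !mxE castmxE !mxE !cast_pidx_zero.
by rewrite !fstI_pidx !sndI_pidx eqxx mulr1.
Qed.

Lemma gateUinv (U : 'M[C]_(2 ^ n * 2 ^ a)) :
  query_gate QUinv U = adjmx (query_gate QU U).
Proof. by rewrite /= adjmx_castmx adjmx_kron adjmx1. Qed.

Lemma unitary_gateU (U : 'M[C]_(2 ^ n * 2 ^ a)) :
  Defs.unitarymx U -> Defs.unitarymx (query_gate QU U).
Proof. by move=> uU; apply/unitary_castmx/unitary_kron1. Qed.

End Queries.

Section ReflectionCircuit.
Variables (C : numClosedFieldType) (n a : nat).
Local Notation Pi := (zero_proj C n (a + 3)).

Definition reflection_circuit : circuit C n a :=
  Circuit 1%:M [:: (QU, reflmx Pi); (QUinv, reflmx Pi); (QU, 1%:M - 2 *: Pi);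
                   (QUinv, reflmx Pi); (QU, reflmx Pi); (QUinv, 1%:M)].

Lemma reflection_circuit_fixed_unitary : circuit_fixed_unitary reflection_circuit.
Proof.
have uR := unitary_reflmx (zero_projK C n (a + 3)) (adjmx_zero_proj C n (a + 3)).
have uR' := unitary_co_reflmx (zero_projK C n (a + 3)) (adjmx_zero_proj C n (a + 3)).
split; first exact: unitary1.
by case=> [|[|[|[|[|[|i]]]]]] //= _; exact: unitary1.
Qed.

Lemma run_reflection_circuit (U : 'M[C]_(2 ^ n * 2 ^ a)) :
  let V := amplify Pi (query_gate QU U) in
  run reflection_circuit U = adjmx V *m (1%:M - 2 *: Pi) *m V.
Proof.
rewrite /run /= !gateUinv /amplify !adjmx_mul adjmxK.
by rewrite adjmx_reflmx ?zero_projK ?adjmx_zero_proj // !mulmxA mul1mx mulmx1.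
Qed.

End ReflectionCircuit.

Theorem lemma5p8 (C : numClosedFieldType) :
  exists K : nat, forall n a : nat, (1 <= n)%N ->
  exists c : circuit C n a,
    (nqueries c <= K)%N /\ circuit_fixed_unitary c /\
    forall (psi : 'cV[C]_(2 ^ n)) (U : 'M[C]_(2 ^ n * 2 ^ a)),
      vnorm2 psi = 1 ->
      block_encoding 2 0 U (psi *m adjmx psi) ->
      block_encoding 1 0 (run c U) (1%:M - 2 *: (psi *m adjmx psi)).
Proof.
exists 6%N => n a _; exists (reflection_circuit C n a).
split=> //; split; first exact: reflection_circuit_fixed_unitary.
move=> psi U psi1 /block_encoding_exact[uU topU].
set Pi := zero_proj C n (a + 3).
have [PiPi PiH] := (zero_projK C n (a + 3), adjmx_zero_proj C n (a + 3)).
set P := kron (psi *m adjmx psi) (delta_mx (zero_idx (a + 3)) (zero_idx (a + 3))).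
have PP : P *m P = P by rewrite kron_idem ?outer_unit_idem ?mul_delta_mx.
have PH : adjmx P = P by rewrite adjmx_kron adjmx_mul adjmxK adjmx_delta.
have uQ := unitary_gateU uU; have [QQ' Q'Q] := uQ.
have PiQPi : Pi *m query_gate QU U *m Pi = 2^-1 *: P.
  rewrite compress_zero_proj topblock_gateU /P -topU kronZl scalerA.
  by rewrite mulVf ?pnatr_eq0 // scale1r.
have PiVPi := compress_amplify PiPi PiH QQ' Q'Q PP PH PiQPi.
have uV := unitary_amplify PiPi PiH uQ.
apply/block_encoding_exact; rewrite run_reflection_circuit; split.
  by do !apply: unitary_mul => //; [apply: unitary_adj | apply: unitary_co_reflmx].
rewrite scale1r -topblock_compress (compress_conj_co_reflmx PiPi PiH (proj2 uV)).
rewrite PiVPi adjmxN PH mulNmx mulmxN opprK PP topblockB topblockZ.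
by rewrite topblock_zero_proj topblock_kron_delta.
Qed.
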